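(* Let $\mathsf{P}$ be a program of the language $\mathcal{H}$ and let $\mathsf{Gr(P)}$ be its ground instantiation, regarded as a (possibly infinite) propositional program. Let $M$ be a three-valued (partial) interpretation of $\mathsf{Gr(P)}$ and let $\mathcal{M}$ be the Herbrand interpretation of $\mathsf{P}$ whose valuation function satisfies $v_{\mathcal{M}}(\mathsf{A}) = M(\mathsf{A})$ for every $\mathsf{A}\in U_{\mathsf{P},o}$. Then $\mathcal{M}$ is a Herbrand model of $\mathsf{P}$ if and only if $M$ is a model of $\mathsf{Gr(P)}$. Moreover, $\mathcal{M}$ is $\leq$-minimal (respectively, $\preceq$-minimal) if and only if $M$ is $\leq$-minimal (respectively, $\preceq$-minimal).
   Context: Types of $\mathcal{H}$: base types $\iota$ (individuals) and $o$ (booleans); functional types $\sigma ::= \iota \mid \iota\to\sigma$; predicate types $\pi ::= o \mid \rho\to\pi$; argument types $\rho ::= \iota \mid \pi$. The alphabet contains predicate variables and predicate constants of every predicate type, individual variables and individual constants of type $\iota$, function symbols of every functional type $\iota^n\to\iota$ ($n\ge1$), negation $\sim$, and equality $\approx$. Terms: variables and constants are terms of their type; if $\mathsf{f}$ is an $n$-ary function symbol and $\mathsf{E}_1,\dots,\mathsf{E}_n$ are terms of type $\iota$, then $(\mathsf{f}\,\mathsf{E}_1\cdots\mathsf{E}_n)$ is a term of type $\iota$; if $\mathsf{E}_1:\rho\to\pi$ and $\mathsf{E}_2:\rho$ are terms then $(\mathsf{E}_1\,\mathsf{E}_2)$ is a term of type $\pi$. Terms of type $o$ are atoms. Literals are atoms,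 expressions $(\mathsf{E}_1\approx\mathsf{E}_2)$ with $\mathsf{E}_1,\mathsf{E}_2$ terms of type $\iota$, and $(\sim\mathsf{E})$ with $\mathsf{E}$ an atom. A clause is $\mathsf{p}\,\mathsf{V}_1\cdots\mathsf{V}_n\leftarrow\mathsf{L}_1,\dots,\mathsf{L}_m$ where $\mathsf{p}$ is a predicate constant of type $\rho_1\to\cdots\to\rho_n\to o$, $\mathsf{V}_1,\dots,\mathsf{V}_n$ are distinct variables of types $\rho_1,\dots,\rho_n$, and the $\mathsf{L}_j$ are literals. A program is a finite set of clauses. For a program $\mathsf{P}$ and argument type $\rho$, $U_{\mathsf{P},\rho}$ is the set of ground (variable-free) terms of type $\rho$ built from the individual constants, function symbols and predicate constants occurring in $\mathsf{P}$; $U^+_{\mathsf{P},o}$ is $U_{\mathsf{P},o}$ together with all $(\mathsf{E}_1\approx\mathsf{E}_2)$ for $\mathsf{E}_1,\mathsf{E}_2\in U_{\mathsf{P},\iota}$ and all $(\sim\mathsf{E})$ for $\mathsf{E}\in U_{\mathsf{P},o}$. The ground instantiation $\mathsf{Gr(P)}$ is the set of all clauses obtained from clauses of $\mathsf{P}$ by substituting for every variable of the clause a term of $U_{\mathsf{P},\rho}$ of the same type $\rho$. It is regarded as a propositional program whose propositional variables are the ground atoms in $U_{\mathsf{P},o}$; a ground equality $(\mathsf{E}_1\approx\mathsf{E}_2)$ in a body is treated as the constant true if $\mathsf{E}_1,\mathsf{E}_2$ are syntactically identical and as the constant false otherwise. A three-valued interpretation of $\mathsf{Gr(P)}$ assigns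 to each ground atom a value in $\{\mathit{false},0,\mathit{true}\}$, extended to negations by $\sim$ swapping $\mathit{false}$ and $\mathit{true}$ and fixing $0$; it is a model if for every clause of $\mathsf{Gr(P)}$, the value of the head is $\ge$ the minimum of the values of the body literals, w.r.t. the truth order $\mathit{false}<0<\mathit{true}$ (empty body has value $\mathit{true}$). A (three-valued) Herbrand interpretation $I$ of $\mathsf{P}$ interprets each constant and function symbol by itself (so ground expressions denote themselves and application is syntactic application) and is determined by a valuation function $v_I:U^+_{\mathsf{P},o}\to\{\mathit{false},0,\mathit{true}\}$ such that $v_I(\mathsf{E}_1\approx\mathsf{E}_2)$ is $\mathit{true}$ if $\mathsf{E}_1=\mathsf{E}_2$ syntactically and $\mathit{false}$ otherwise, and $v_I(\sim\mathsf{E})$ is $\mathit{false},0,\mathit{true}$ when $v_I(\mathsf{E})$ is $\mathit{true},0,\mathit{false}$ respectively. A Herbrand state $s$ assigns to each variable of type $\rho$ an element of $U_{\mathsf{P},\rho}$; for an expression $\mathsf{E}$, $[\![\mathsf{E}]\!]_s$ is the ground expression obtained by replacing each variable $\mathsf{V}$ by $s(\mathsf{V})$. $I$ is a (Herbrand) model of $\mathsf{P}$ if for every clause $\mathsf{A}\leftarrow\mathsf{L}_1,\dots,\mathsf{L}_m$ of $\mathsf{P}$ and every state $s$, $v_I([\![\mathsf{A}]\!]_s)\ge\min\{v_I([\![\mathsf{L}_1]\!]_s),\dots,v_I([\![\mathsf{L}_m]\!]_s)\}$ in the truth order. Orderings: the truth order $\leq$ on values is $\mathit{false}\le0\le\mathit{true}$;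 the Fitting order $\preceq$ is $0\preceq\mathit{false}$, $0\preceq\mathit{true}$. For interpretations (of $\mathsf{P}$ or of $\mathsf{Gr(P)}$), $I\le J$ (resp. $I\preceq J$) iff the value of every ground atom $\mathsf{A}\in U_{\mathsf{P},o}$ under $I$ is $\le$ (resp. $\preceq$) its value under $J$. A model $M$ is $\le$-minimal (resp. $\preceq$-minimal) if there is no different model $N$ with $N\le M$ (resp. $N\preceq M$). *)

From Stdlib Require Import List ClassicalEpsilon.
Import ListNotations.

(* argument types  rho ::= iota | pi ;  predicate types  pi ::= o | rho -> pi *)
Inductive aty : Type :=
| AI : aty
| AP : pty -> aty
with pty : Type :=
| PO : pty
| PArr : aty -> pty -> pty.

Fixpoint arrows (rs : list aty) : pty :=
  match rs with [] => PO | r :: rs' => PArr r (arrows rs') end.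

(* Variables and predicate constants carry their (argument / predicate) type.
   FApp f [E1;..;En] is the application of the n-ary function symbol (f,n). *)
Inductive term : Type :=
| Var  (x : nat) (r : aty)
| PCon (c : nat) (p : pty)
| ICon (c : nat)
| FApp (f : nat) (args : list term)
| App  (t1 t2 : term).

Inductive has_ty : term -> aty -> Prop :=
| ty_var x r : has_ty (Var x r) r
| ty_pcon c p : has_ty (PCon c p) (AP p)
| ty_icon c : has_ty (ICon c) AI
| ty_fapp f args :
    args <> [] -> (forall t, In t args -> has_ty t AI) -> has_ty (FApp f args) AI
| ty_app t1 t2 r p :
    has_ty t1 (AP (PArr r p)) -> has_ty t2 r -> has_ty (App t1 t2) (AP p).

Inductive sym : Type :=
| SP (c : nat) (p : pty)
| SI (c : nat)
| SF (f : nat) (n : nat).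

Fixpoint syms (t : term) : list sym :=
  match t with
  | Var _ _ => []
  | PCon c p => [SP c p]
  | ICon c => [SI c]
  | FApp f args =>
      SF f (length args) ::
      (fix go (l : list term) : list sym :=
         match l with [] => [] | a :: l' => syms a ++ go l' end) args
  | App a b => syms a ++ syms b
  end.

Fixpoint vars (t : term) : list (nat * aty) :=
  match t with
  | Var x r => [(x, r)]
  | PCon _ _ | ICon _ => []
  | FApp _ args =>
      (fix go (l : list term) : list (nat * aty) :=
         match l with [] => [] | a :: l' => vars a ++ go l' end) args
  | App a b => vars a ++ vars b
  end.

Definition state := nat -> aty -> term.

Fixpoint subst (s : state) (t : term) : term :=
  match t with
  | Var x r => s x r
  | PCon c p => PCon c p
  | ICon c => ICon c
  | FApp f args => FApp f (map (subst s) args)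
  | App a b => App (subst s a) (subst s b)
  end.

Inductive lit : Type :=
| LAtom (t : term)
| LEq (t1 t2 : term)
| LNeg (t : term).

Definition lit_syms (l : lit) : list sym :=
  match l with LAtom t | LNeg t => syms t | LEq a b => syms a ++ syms b end.
Definition lit_vars (l : lit) : list (nat * aty) :=
  match l with LAtom t | LNeg t => vars t | LEq a b => vars a ++ vars b end.
Definition subst_lit (s : state) (l : lit) : lit :=
  match l with
  | LAtom t => LAtom (subst s t)
  | LEq a b => LEq (subst s a) (subst s b)
  | LNeg t => LNeg (subst s t)
  end.

Definition wf_lit (l : lit) : Prop :=
  match l with
  | LAtom t | LNeg t => has_ty t (AP PO)
  | LEq a b => has_ty a AI /\ has_ty b AI
  end.

(* clause  p V1 ... Vn <- L1, ..., Lm *)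
Record clause : Type := Clause {
  head_c : nat;
  head_ty : pty;
  head_args : list (nat * aty);
  body : list lit }.

Definition head_term (c : clause) : term :=
  fold_left (fun acc v => App acc (Var (fst v) (snd v)))
            (head_args c) (PCon (head_c c) (head_ty c)).

Definition wf_clause (c : clause) : Prop :=
  head_ty c = arrows (map snd (head_args c)) /\
  NoDup (head_args c) /\
  (forall l, In l (body c) -> wf_lit l).

Definition program := list clause.
Definition wf_program (P : program) : Prop := forall c, In c P -> wf_clause c.

Definition clause_syms (c : clause) : list sym :=
  SP (head_c c) (head_ty c) :: flat_map lit_syms (body c).
Definition prog_syms (P : program) : list sym := flat_map clause_syms P.
Definition clause_vars (c : clause) : list (nat * aty) :=
  head_args c ++ flat_map lit_vars (body c).

(* U_{P,rho}: ground terms of type rho built from symbols occurring in P *)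
Definition inU (P : program) (t : term) (r : aty) : Prop :=
  vars t = [] /\ has_ty t r /\ (forall s, In s (syms t) -> In s (prog_syms P)).

Definition admissible (P : program) (c : clause) (s : state) : Prop :=
  forall x r, In (x, r) (clause_vars c) -> inU P (s x r) r.

Inductive tv : Type := FF | ZZ | TT.

Definition tv_le (a b : tv) : Prop :=
  match a, b with
  | FF, _ => True
  | ZZ, (ZZ | TT) => True
  | TT, TT => True
  | _, _ => False
  end.

Definition tv_fle (a b : tv) : Prop :=   (* Fitting order: 0 below false, true *)
  a = ZZ \/ a = b.

Definition tv_neg (a : tv) : tv :=
  match a with FF => TT | ZZ => ZZ | TT => FF end.

Definition tv_min (a b : tv) : tv :=
  match a, b with
  | FF, _ | _, FF => FF
  | ZZ, _ | _, ZZ => ZZ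
  | TT, TT => TT
  end.

Definition body_min (vs : list tv) : tv := fold_right tv_min TT vs.

Definition syn_eq_val (a b : term) : tv :=
  if excluded_middle_informative (a = b) then TT else FF.

Definition ground_clause := (term * list lit)%type.

Definition Gr (P : program) (gc : ground_clause) : Prop :=
  exists c s, In c P /\ admissible P c s /\
    gc = (subst s (head_term c), map (subst_lit s) (body c)).

(* three-valued interpretation of Gr(P): a value for each ground atom
   (only its values on U_{P,o} matter) *)
Definition ginterp := term -> tv.

Definition gr_lit_val (M : ginterp) (l : lit) : tv :=
  match l with
  | LAtom t => M t
  | LNeg t => tv_neg (M t)
  | LEq a b => syn_eq_val a b
  end.

Definition gr_model (P : program) (M : ginterp) : Prop :=
  forall h b, Gr P (h, b) -> tv_le (body_min (map (gr_lit_val M) b)) (M h).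

Definition gr_le (P : program) (I J : ginterp) : Prop :=
  forall A, inU P A (AP PO) -> tv_le (I A) (J A).
Definition gr_fle (P : program) (I J : ginterp) : Prop :=
  forall A, inU P A (AP PO) -> tv_fle (I A) (J A).
Definition gr_differ (P : program) (I J : ginterp) : Prop :=
  exists A, inU P A (AP PO) /\ I A <> J A.

Definition gr_le_minimal (P : program) (M : ginterp) : Prop :=
  gr_model P M /\ ~ (exists N, gr_model P N /\ gr_differ P N M /\ gr_le P N M).
Definition gr_fle_minimal (P : program) (M : ginterp) : Prop :=
  gr_model P M /\ ~ (exists N, gr_model P N /\ gr_differ P N M /\ gr_fle P N M).

(* A Herbrand interpretation is determined by its valuation on ground atoms;
   on U^+_{P,o} equalities and negations are valued as prescribed. *)
Record hinterp : Type := HInterp { hval : term -> tv }.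

Definition h_val (I : hinterp) (l : lit) : tv :=
  match l with
  | LAtom t => hval I t
  | LEq a b => syn_eq_val a b
  | LNeg t => tv_neg (hval I t)
  end.

Definition h_model (P : program) (I : hinterp) : Prop :=
  forall c, In c P -> forall s : state, admissible P c s ->
    tv_le (body_min (map (fun l => h_val I (subst_lit s l)) (body c)))
          (hval I (subst s (head_term c))).

Definition h_le (P : program) (I J : hinterp) : Prop :=
  forall A, inU P A (AP PO) -> tv_le (hval I A) (hval J A).
Definition h_fle (P : program) (I J : hinterp) : Prop :=
  forall A, inU P A (AP PO) -> tv_fle (hval I A) (hval J A).
Definition h_differ (P : program) (I J : hinterp) : Prop :=
  exists A, inU P A (AP PO) /\ hval I A <> hval J A.

Definition h_le_minimal (P : program) (M : hinterp) : Prop :=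
  h_model P M /\ ~ (exists N, h_model P N /\ h_differ P N M /\ h_le P N M).
Definition h_fle_minimal (P : program) (M : hinterp) : Prop :=
  h_model P M /\ ~ (exists N, h_model P N /\ h_differ P N M /\ h_fle P N M).

(* Gr(P) consists exactly of the instances of clauses of P under admissible states, and a
   Herbrand interpretation evaluates a clause under a state by evaluating that instance, so
   the two notions of model coincide.  Since P is well typed, every atom of a ground clause
   lies in U_{P,o}; hence being a model of Gr(P), and the orders used for minimality, only
   depend on the values on U_{P,o}, where the two interpretations agree. *)
From Stdlib Require Import List.
Import ListNotations.

Lemma vars_FApp f args : vars (FApp f args) = flat_map vars args.
Proof. induction args; reflexivity. Qed.

Lemma syms_FApp f args : syms (FApp f args) = SF f (length args) :: flat_map syms args.
Proof. induction args; reflexivity. Qed.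

Lemma flat_map_nil {A B} (f : A -> list B) l :
  (forall x, In x l -> f x = []) -> flat_map f l = [].
Proof.
  induction l as [|a l IH]; intros Hf; simpl; [reflexivity|].
  rewrite (Hf a), IH; [reflexivity | intros x Hx | left; reflexivity].
  apply Hf; right; exact Hx.
Qed.

Lemma subst_inU P s t r :
  has_ty t r ->
  (forall x r', In (x, r') (vars t) -> inU P (s x r') r') ->
  incl (syms t) (prog_syms P) ->
  inU P (subst s t) r.
Proof.
  intros Ht; induction Ht as [x r|c p|c|f args Hne _ IH|t1 t2 r p _ IH1 _ IH2];
    intros Hs Hsyms; simpl.
  - apply Hs; simpl; auto.
  - repeat split; [constructor | exact Hsyms].
  - repeat split; [constructor | exact Hsyms].
  - rewrite vars_FApp in Hs; rewrite syms_FApp in Hsyms.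
    assert (Hargs : forall t, In t args -> inU P (subst s t) AI).
    { intros t Hin; apply IH; [exact Hin| |].
      - intros x r' Hx; apply Hs, in_flat_map; eauto.
      - intros y Hy; apply Hsyms; right; apply in_flat_map; eauto. }
    repeat split.
    + rewrite vars_FApp; apply flat_map_nil.
      intros u Hu; apply in_map_iff in Hu as [t [<- Hin]]; apply Hargs, Hin.
    + constructor.
      * destruct args; simpl; congruence.
      * intros u Hu; apply in_map_iff in Hu as [t [<- Hin]]; apply Hargs, Hin.
    + rewrite syms_FApp, length_map.
      intros y [<-|Hy]; [apply Hsyms; left; reflexivity|].
      apply in_flat_map in Hy as [u [Hu Hy]]; apply in_map_iff in Hu as [t [<- Hin]].
      apply (Hargs t Hin), Hy.
  - simpl in Hs, Hsyms; apply incl_app_inv in Hsyms as [Hsyms1 Hsyms2].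
    destruct (IH1 (fun x r' Hx => Hs x r' (in_or_app _ _ _ (or_introl Hx))) Hsyms1)
      as [Hv1 [Hty1 Hsy1]].
    destruct (IH2 (fun x r' Hx => Hs x r' (in_or_app _ _ _ (or_intror Hx))) Hsyms2)
      as [Hv2 [Hty2 Hsy2]].
    repeat split.
    + simpl; rewrite Hv1, Hv2; reflexivity.
    + econstructor; eauto.
    + simpl; apply incl_app; assumption.
Qed.

Definition app_vars (t : term) (vs : list (nat * aty)) : term :=
  fold_left (fun acc v => App acc (Var (fst v) (snd v))) vs t.

Lemma head_term_app_vars c :
  head_term c = app_vars (PCon (head_c c) (head_ty c)) (head_args c).
Proof. reflexivity. Qed.

Lemma vars_app_vars t vs : vars (app_vars t vs) = vars t ++ vs.
Proof.
  revert t; induction vs as [|[x r] vs IH]; intros t; simpl.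
  - rewrite app_nil_r; reflexivity.
  - unfold app_vars in *; rewrite IH; simpl; rewrite <- app_assoc; reflexivity.
Qed.

Lemma syms_app_vars t vs : syms (app_vars t vs) = syms t.
Proof.
  revert t; induction vs as [|[x r] vs IH]; intros t; simpl; [reflexivity|].
  unfold app_vars in *; rewrite IH; simpl; rewrite app_nil_r; reflexivity.
Qed.

Lemma app_vars_ty t vs : has_ty t (AP (arrows (map snd vs))) -> has_ty (app_vars t vs) (AP PO).
Proof.
  revert t; induction vs as [|[x r] vs IH]; intros t Ht; simpl in *; [exact Ht|].
  apply IH; econstructor; [exact Ht | constructor].
Qed.

Lemma clause_syms_incl P c : In c P -> incl (clause_syms c) (prog_syms P).
Proof. intros Hc y Hy; apply in_flat_map; eauto. Qed.

Section GroundClauses.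

Variables (P : program) (c : clause) (s : state).
Hypotheses (Hwf : wf_clause c) (Hc : In c P) (Hs : admissible P c s).

Lemma head_instance_inU : inU P (subst s (head_term c)) (AP PO).
Proof.
  destruct Hwf as [Hty _].
  rewrite head_term_app_vars; apply subst_inU.
  - apply app_vars_ty; rewrite <- Hty; constructor.
  - intros x r Hx; apply Hs; rewrite vars_app_vars in Hx; apply in_or_app; auto.
  - rewrite syms_app_vars; intros y [<-|[]].
    apply (clause_syms_incl P c Hc); left; reflexivity.
Qed.

Lemma body_instance_inU l t :
  In l (body c) -> (l = LAtom t \/ l = LNeg t) -> inU P (subst s t) (AP PO).
Proof.
  destruct Hwf as [_ [_ Hlits]]; intros Hl Ht.
  assert (Hwl := Hlits l Hl).
  assert (Hvars : incl (lit_vars l) (clause_vars c))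
    by (intros v Hv; apply in_or_app; right; apply in_flat_map; eauto).
  assert (Hsyms : incl (lit_syms l) (prog_syms P))
    by (intros y Hy; apply (clause_syms_incl P c Hc); right; apply in_flat_map; eauto).
  destruct Ht as [->| ->]; apply subst_inU; try exact Hwl; try exact Hsyms;
    intros x r Hx; apply Hs, Hvars, Hx.
Qed.

End GroundClauses.

Definition agree_on_U (P : program) (G G' : ginterp) : Prop :=
  forall A, inU P A (AP PO) -> G A = G' A.

Lemma h_model_iff_gr_model P I : h_model P I <-> gr_model P (hval I).
Proof.
  split.
  - intros HI h b [c [s [Hc [Hs Hgc]]]]; injection Hgc as -> ->.
    rewrite map_map; apply HI; assumption.
  - intros HG c Hc s Hs.
    rewrite <- (map_map (subst_lit s) (gr_lit_val (hval I))).
    apply HG; exists c, s; auto.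
Qed.

Lemma gr_model_agree P G G' :
  wf_program P -> agree_on_U P G G' -> gr_model P G -> gr_model P G'.
Proof.
  intros HP Hagree HG h b Hgr.
  destruct Hgr as [c [s [Hc [Hs Hgc]]]]; injection Hgc as Hh Hb.
  assert (Hwf := HP c Hc).
  rewrite <- Hagree by (subst h; apply head_instance_inU; assumption).
  replace (map (gr_lit_val G') b) with (map (gr_lit_val G) b).
  { apply HG; exists c, s; subst; auto. }
  subst b; apply map_ext_in; intros l Hl.
  apply in_map_iff in Hl as [l0 [<- Hl0]].
  assert (Hatom : forall t, l0 = LAtom t \/ l0 = LNeg t -> G (subst s t) = G' (subst s t))
    by (intros t Ht; apply Hagree, (body_instance_inU P c s Hwf Hc Hs l0); assumption).
  destruct l0 as [t|t1 t2|t]; simpl; [| reflexivity |]; rewrite Hatom; auto.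
Qed.

Section Minimality.

Variables (P : program) (ord : tv -> tv -> Prop).

Definition below_on_U (G G' : ginterp) : Prop :=
  forall A, inU P A (AP PO) -> ord (G A) (G' A).

(* Common shape of [gr_le_minimal] / [gr_fle_minimal] and [h_le_minimal] / [h_fle_minimal],
   which unfold to these for [ord := tv_le] / [ord := tv_fle]. *)
Definition gr_minimal (M : ginterp) : Prop :=
  gr_model P M /\
  ~ (exists N, gr_model P N /\ gr_differ P N M /\ below_on_U N M).

Definition h_minimal (M : hinterp) : Prop :=
  h_model P M /\
  ~ (exists N, h_model P N /\ gr_differ P (hval N) (hval M) /\ below_on_U (hval N) (hval M)).

Lemma h_minimal_iff I : h_minimal I <-> gr_minimal (hval I).
Proof.
  unfold h_minimal, gr_minimal; rewrite h_model_iff_gr_model.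
  split; intros [HI Hmin]; split; auto; intros [N HN]; apply Hmin.
  - exists (HInterp N); rewrite h_model_iff_gr_model; exact HN.
  - exists (hval N); rewrite <- h_model_iff_gr_model; exact HN.
Qed.

Lemma gr_minimal_agree G G' :
  wf_program P -> agree_on_U P G G' -> gr_minimal G -> gr_minimal G'.
Proof.
  intros HP Hagree [HG Hmin]; split.
  - exact (gr_model_agree P G G' HP Hagree HG).
  - intros [N [HN [[A [HA Hdiff]] Hbelow]]]; apply Hmin; exists N.
    repeat split; [exact HN | |].
    + exists A; rewrite Hagree; auto.
    + intros B HB; rewrite Hagree; auto.
Qed.

End Minimality.

Theorem theorem1 (P : program) (HP : wf_program P) (M : ginterp) (MM : hinterp)
  (HMM : forall A, inU P A (AP PO) -> hval MM A = M A) :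
  (h_model P MM <-> gr_model P M) /\
  (h_le_minimal P MM <-> gr_le_minimal P M) /\
  (h_fle_minimal P MM <-> gr_fle_minimal P M).
Proof.
  assert (Hagree : agree_on_U P (hval MM) M) by exact HMM.
  assert (Hagree' : agree_on_U P M (hval MM)) by (intros A HA; symmetry; auto).
  assert (Hminimal : forall ord, h_minimal P ord MM <-> gr_minimal P ord M).
  { intros ord; rewrite h_minimal_iff.
    split; apply gr_minimal_agree; assumption. }
  split; [| split; [exact (Hminimal tv_le) | exact (Hminimal tv_fle)]].
  rewrite h_model_iff_gr_model.
  split; apply gr_model_agree; assumption.
Qed.
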